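(* Let $h\colon\{0,1\}^k\to\{0,1\}$ be a partial function, and for each $z\in\{0,1\}$ let $\mathcal D_z$ be a probability distribution over $h^{-1}(z)$. Then for every $\varepsilon\in[0,1]$ there exist a conjunction $C\colon\{0,1\}^k\to\{0,1\}$ of width $\mathsf{PostBPP}_\varepsilon(h)$ and a $z\in\{0,1\}$ such that $\varepsilon\cdot C(\mathcal D_z)\ge(1-\varepsilon)\cdot C(\mathcal D_{1-z})$ and $C(\mathcal D_z)>0$.
   Context: A conjunction is an AND of literals (variables or negated variables); its width is its number of literals. For a conjunction $C$ and distribution $\mathcal D$, $C(\mathcal D)=\Pr_{x\sim\mathcal D}[C(x)=1]$. A randomized decision tree is a probability distribution over deterministic decision trees; its cost is the maximum depth of a tree in its support. $\mathsf{PostBPP}_\varepsilon(h)$ is the minimum cost of a randomized decision tree with leaves labeled in $\{0,1,\bot\}$ such that on every $x$ in the domain of $h$, the probability of outputting $\bot$ is $<1$ and, conditioned on not outputting $\bot$, the output equals $h(x)$ with probability $\ge 1-\varepsilon$. *)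

From HB Require Import structures.
From mathcomp Require Import all_boot all_order all_algebra.
From mathcomp Require Import reals.
Set Implicit Arguments. Unset Strict Implicit. Unset Printing Implicit Defensive.
Import Order.TTheory GRing.Theory Num.Theory.
Local Open Scope ring_scope.

Definition input (k : nat) := {ffun 'I_k -> bool}.

(* Partial Boolean function: None = outside the domain. *)
Definition pfun (k : nat) := input k -> option bool.

(* Deterministic decision trees; leaves labeled by option bool (None = ⊥). *)
Inductive dtree (k : nat) : Type :=
| Leaf of option bool
| Node of 'I_k & dtree k & dtree k.

Fixpoint depth k (t : dtree k) : nat :=
  match t with
  | Leaf _ => 0
  | Node _ t0 t1 => (maxn (depth t0) (depth t1)).+1
  end.

Fixpoint eval_tree k (t : dtree k) (x : input k) : option bool :=
  match t with
  | Leaf o => o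
  | Node i t0 t1 => if x i then eval_tree t1 x else eval_tree t0 x
  end.

(* A randomized decision tree: finitely supported probability distribution
   over deterministic trees, given as a list of (weight, tree) pairs. *)
Definition rdtree (R : realType) (k : nat) := seq (R * dtree k).

Definition is_rdtree (R : realType) k (T : rdtree R k) : Prop :=
  all (fun p => 0 <= p.1) T /\ \sum_(p <- T) p.1 = 1.

Definition rcost (R : realType) k (T : rdtree R k) : nat :=
  \max_(p <- T | 0 < p.1) depth p.2.

Definition prob_out (R : realType) k (T : rdtree R k) (x : input k) (o : option bool) : R :=
  \sum_(p <- T) p.1 * (eval_tree p.2 x == o)%:R.

Definition prob_not_bot (R : realType) k (T : rdtree R k) (x : input k) : R :=
  \sum_(p <- T) p.1 * (eval_tree p.2 x != None)%:R.

Definition postbpp_correct (R : realType) k (eps : R) (h : pfun k) (T : rdtree R k) : Prop :=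
  is_rdtree T /\
  forall x b, h x = Some b ->
    prob_out T x None < 1 /\
    prob_out T x (Some b) / prob_not_bot T x >= 1 - eps.

Definition PostBPP_eq (R : realType) k (eps : R) (h : pfun k) (d : nat) : Prop :=
  (exists T : rdtree R k, postbpp_correct eps h T /\ rcost T = d) /\
  (forall T : rdtree R k, postbpp_correct eps h T -> (d <= rcost T)%N).

Definition conj_t (k : nat) := {set ('I_k * bool)}.
Definition width k (C : conj_t k) : nat := #|C|.
Definition conj_eval k (C : conj_t k) (x : input k) : bool :=
  [forall l in C, x l.1 == l.2].

Definition is_dist (R : realType) k (D : {ffun input k -> R}) : Prop :=
  (forall x, 0 <= D x) /\ \sum_x D x = 1.

Definition conj_prob (R : realType) k (C : conj_t k) (D : {ffun input k -> R}) : R :=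
  \sum_x D x * (conj_eval C x)%:R.

(* Each tree of depth at most d is a disjoint union of its root-to-leaf paths,
   which are conjunctions of width at most d, so the probability that a PostBPP
   algorithm T of cost d outputs z is a weighted sum of such conjunctions.
   Correctness gives eps Pr[T(x) = z] >= (1 - eps) Pr[T(x) = 1 - z] on the support
   of D_z; averaging over x ~ D_z, summing over z and regrouping by leaves, the gaps
   eps C(D_z) - (1 - eps) C(D_(1-z)) of the conjunctions C of the z-leaves have a
   nonnegative weighted total while their masses C(D_z) have a positive one, so some
   C has C(D_z) > 0 and a nonnegative gap.  Such a C is padded to width exactly d:
   both C(D_z) and the gap split additively between the literals x_i and ~x_i of a
   fresh variable, so one of the two extensions keeps both properties.  Fresh
   variables exist since d <= k, every tree being equivalent to the complete tree
   of depth k. *)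

From HB Require Import structures.
From mathcomp Require Import all_boot all_order all_algebra.
From mathcomp Require Import reals ring lra zify.
Set Implicit Arguments. Unset Strict Implicit. Unset Printing Implicit Defensive.
Import Order.TTheory GRing.Theory Num.Theory.
Local Open Scope ring_scope.

Lemma exists_pos_of_sums (R : realDomainType) (I : eqType) (s : seq I) (a g : I -> R) :
    (forall i, i \in s -> g i <= a i) ->
    0 < \sum_(i <- s) a i -> 0 <= \sum_(i <- s) g i ->
  exists2 i, i \in s & 0 < a i /\ 0 <= g i.
Proof.
move=> g_le_a sum_a_gt0 sum_g_ge0.
suff /hasP[i i_s /andP[]] : has (fun i => (0 < a i) && (0 <= g i)) s by exists i.
apply: contraLR sum_g_ge0 => /hasPn bad; rewrite -ltNge.
have g_le0 i : i \in s -> g i <= 0.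
  move=> i_s; move: (bad i i_s); rewrite negb_and -leNgt -ltNge.
  by case/orP=> [/(le_trans (g_le_a i i_s)) | /ltW].
have [j j_s a_j_gt0] : exists2 j, j \in s & 0 < a j.
  apply/hasP; apply: contraLR sum_a_gt0 => /hasPn a_le0.
  by rewrite -leNgt big_seq sumr_le0 // => i /a_le0; rewrite -leNgt.
have g_j_lt0 : g j < 0 by move: (bad j j_s); rewrite a_j_gt0 -ltNge.
have : \sum_(i <- rem j s) g i <= 0 by rewrite big_seq sumr_le0 // => i /mem_rem /g_le0.
by rewrite (big_rem j j_s) /=; lra.
Qed.

Lemma sumr_count (R : pzSemiRingType) (T : Type) (a : pred T) (s : seq T) :
  \sum_(x <- s) (a x)%:R = (count a s)%:R :> R.
Proof. by elim: s => [|x s IHs]; rewrite ?big_nil ?big_cons //= IHs natrD. Qed.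

Section Expectation.
Variables (R : realType) (k : nat) (D : {ffun input k -> R}).
Hypothesis D_dist : is_dist D.

Lemma dist_mulr_ge0 x (c : R) : (0 < D x -> 0 <= c) -> 0 <= D x * c.
Proof.
move=> c_ge0; have [D_ge0 _] := D_dist; have := D_ge0 x.
rewrite (le0r (D x)) => /orP [/eqP -> | D_gt0]; first by rewrite mul0r.
by rewrite mulr_ge0 ?c_ge0 ?ltW.
Qed.

Lemma expect_ge0 (f : input k -> R) :
  (forall x, 0 < D x -> 0 <= f x) -> 0 <= \sum_x D x * f x.
Proof. by move=> f_ge0; apply: sumr_ge0 => x _; apply/dist_mulr_ge0/f_ge0. Qed.

Lemma expect_gt0 (f : input k -> R) :
  (forall x, 0 < D x -> 0 < f x) -> 0 < \sum_x D x * f x.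
Proof.
move=> f_gt0; have [D_ge0 D_sum1] := D_dist.
have [x D_x_gt0] : exists x, 0 < D x.
  apply/existsP; apply: contraT => /existsPn D_le0; rewrite -(oner_eq0 R); apply/eqP.
  by rewrite -D_sum1 big1 // => x _; apply/eqP; rewrite eq_le D_ge0 andbT leNgt D_le0.
rewrite lt0r psumr_neq0 => [|y _]; last by apply/dist_mulr_ge0 => /f_gt0/ltW.
rewrite expect_ge0 => [|y /f_gt0/ltW //]; rewrite andbT.
by apply/hasP; exists x; rewrite ?mem_index_enum ?mulr_gt0 ?f_gt0.
Qed.

End Expectation.

Section Conjunctions.
Variable k : nat.

Lemma conj_eval_set0 (x : input k) : conj_eval set0 x.
Proof. by apply/forall_inP => l; rewrite in_set0. Qed.

Lemma conj_evalU1 (C : conj_t k) i b x :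
  conj_eval ((i, b) |: C) x = (x i == b) && conj_eval C x.
Proof.
apply/forall_inP/andP => [C_x | [/eqP x_i /forall_inP C_x] l].
  split; first exact: (C_x (i, b) (setU11 _ _)).
  by apply/forall_inP => l l_C; apply/C_x/setU1r.
by rewrite in_setU1 => /orP [/eqP -> | /C_x //]; rewrite /= x_i.
Qed.

Lemma width_setU1 (C : conj_t k) l : (width (l |: C) <= (width C).+1)%N.
Proof. by rewrite /width cardsU1; case: (l \notin C). Qed.

Lemma exists_fresh_var (C : conj_t k) :
  (width C < k)%N -> exists i, forall b, (i, b) \notin C.
Proof.
move=> C_small; have /subsetPn [i _ i_fresh] : ~~ ([set: 'I_k] \subset [set l.1 | l in C]).
  apply: contraTN C_small => /subset_leq_card; rewrite cardsT card_ord -leqNgt => k_le.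
  exact: leq_trans k_le (leq_imset_card _ _).
by exists i => b; apply: contra i_fresh => /(imset_f (fun l : 'I_k * bool => l.1)).
Qed.

Variable R : realType.

Lemma conj_prob_set0 (D : {ffun input k -> R}) : is_dist D -> conj_prob set0 D = 1.
Proof. by case=> _ <-; apply: eq_bigr => x _; rewrite conj_eval_set0 mulr1. Qed.

Lemma conj_prob_setU1 (D : {ffun input k -> R}) (C : conj_t k) i :
  conj_prob C D = conj_prob ((i, false) |: C) D + conj_prob ((i, true) |: C) D.
Proof.
rewrite /conj_prob -big_split; apply: eq_bigr => x _ /=.
by rewrite !conj_evalU1 -mulrDr; case: (x i); rewrite /= ?addr0 ?add0r.
Qed.

End Conjunctions.

Section LeafPaths.
Variable k : nat.

Fixpoint leaf_paths (t : dtree k) (o : option bool) : seq (conj_t k) :=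
  match t with
  | Leaf o' => if o' == o then [:: set0] else [::]
  | Node i t0 t1 => [seq (i, false) |: C | C <- leaf_paths t0 o] ++
                    [seq (i, true) |: C | C <- leaf_paths t1 o]
  end.

Lemma count_conj_evalU1 (s : seq (conj_t k)) i b (x : input k) :
  count (fun C => conj_eval C x) [seq (i, b) |: C | C <- s] =
  ((x i == b) * count (fun C => conj_eval C x) s)%N.
Proof.
elim: s => [|C s /= ->]; rewrite ?muln0 // conj_evalU1.
by case: (x i == b); rewrite ?mul1n.
Qed.

Lemma count_leaf_paths (t : dtree k) o (x : input k) :
  count (fun C => conj_eval C x) (leaf_paths t o) = (eval_tree t x == o).
Proof.
elim: t => [o' | i t0 IH0 t1 IH1] /=; first by case: (o' == o); rewrite //= conj_eval_set0.
rewrite count_cat !count_conj_evalU1 IH0 IH1.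
by case: (x i); rewrite /= ?mul0n ?mul1n ?addn0.
Qed.

Lemma leaf_paths_width (t : dtree k) o C : C \in leaf_paths t o -> (width C <= depth t)%N.
Proof.
elim: t C => [o' | i t0 IH0 t1 IH1] C /=.
  by case: (o' == o); rewrite ?inE // => /eqP ->; rewrite /width cards0.
rewrite mem_cat => /orP [] /mapP [C' C'_in ->]; apply: leq_trans (width_setU1 _ _) _.
  by rewrite ltnS (leq_trans (IH0 _ C'_in)) ?leq_maxl.
by rewrite ltnS (leq_trans (IH1 _ C'_in)) ?leq_maxr.
Qed.

Variable R : realType.

Lemma sum_conj_prob_leaf_paths (D : {ffun input k -> R}) (t : dtree k) o :
  \sum_(C <- leaf_paths t o) conj_prob C D = \sum_x D x * (eval_tree t x == o)%:R.
Proof.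
rewrite exchange_big; apply: eq_bigr => x _.
by rewrite -big_distrr -count_leaf_paths -sumr_count.
Qed.

Fixpoint dtree_eqb (t u : dtree k) : bool :=
  match t, u with
  | Leaf o, Leaf o' => o == o'
  | Node i t0 t1, Node i' u0 u1 => [&& i == i', dtree_eqb t0 u0 & dtree_eqb t1 u1]
  | _, _ => false
  end.

Lemma dtree_eqP : Equality.axiom dtree_eqb.
Proof.
move=> t u; elim: t u => [o | i t0 IH0 t1 IH1] [o' | i' u0 u1] /=; try by constructor.
  by apply: (iffP eqP) => [-> | []].
case: (i =P i') => [<- | ne_i] /=; last by constructor; case.
case: (IH0 u0) => [<- | ne_t0] /=; last by constructor; case.
by case: (IH1 u1) => [<- | ne_t1]; constructor; [| case].
Qed.

HB.instance Definition _ := hasDecEq.Build (dtree k) dtree_eqP.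

Definition rleaf_paths (T : rdtree R k) o : seq (R * conj_t k) :=
  [seq (p.1, C) | p <- T, C <- leaf_paths p.2 o].

Lemma expect_prob_out (D : {ffun input k -> R}) (T : rdtree R k) o :
  \sum_x D x * prob_out T x o = \sum_(w <- rleaf_paths T o) w.1 * conj_prob w.2 D.
Proof.
rewrite big_allpairs_dep /=.
under [RHS]eq_bigr => p _ do rewrite -big_distrr sum_conj_prob_leaf_paths big_distrr.
rewrite exchange_big; apply: eq_bigr => x _.
by rewrite /prob_out big_distrr; apply: eq_bigr => p _ /=; rewrite mulrCA.
Qed.

Lemma mem_rleaf_paths (T : rdtree R k) o w : w \in rleaf_paths T o ->
  exists2 p, p \in T & w.1 = p.1 /\ w.2 \in leaf_paths p.2 o.
Proof. by case/allpairsPdep => p [C [p_T C_in ->]]; exists p. Qed.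

Lemma rleaf_paths_weight_ge0 (T : rdtree R k) o w :
  is_rdtree T -> w \in rleaf_paths T o -> 0 <= w.1.
Proof. by case=> /allP T_ge0 _ /mem_rleaf_paths [p /T_ge0 p_ge0 [-> _]]. Qed.

Lemma rleaf_paths_width (T : rdtree R k) o w :
  w \in rleaf_paths T o -> 0 < w.1 -> (width w.2 <= rcost T)%N.
Proof.
case/mem_rleaf_paths => p p_T [-> C_in] p_gt0.
apply: leq_trans (leaf_paths_width C_in) _.
exact: (leq_bigmax_seq (F := fun p => depth p.2)).
Qed.

End LeafPaths.

Section Correctness.
Variables (R : realType) (k : nat) (T : rdtree R k).

Lemma prob_not_bot_split x b :
  prob_not_bot T x = prob_out T x (Some b) + prob_out T x (Some (~~ b)).
Proof.
rewrite /prob_not_bot /prob_out -big_split; apply: eq_bigr => p _ /=.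
by rewrite -mulrDr; case: (eval_tree p.2 x) => [[]|]; case: b; rewrite /= ?addr0 ?add0r.
Qed.

Lemma prob_bot_add_not_bot x : prob_out T x None + prob_not_bot T x = \sum_(p <- T) p.1.
Proof.
rewrite /prob_not_bot /prob_out -big_split; apply: eq_bigr => p _ /=.
by rewrite -mulrDr; case: (eval_tree p.2 x) => [[]|]; rewrite /= ?addr0 ?add0r ?mulr1.
Qed.

Variables (eps : R) (h : pfun k).
Hypothesis T_correct : postbpp_correct eps h T.

Lemma correct_prob_out x b : h x = Some b ->
  0 < prob_not_bot T x /\ (1 - eps) * prob_not_bot T x <= prob_out T x (Some b).
Proof.
move=> hx; have [[_ T_sum1] T_post] := T_correct; have [bot_lt1 ratio] := T_post x b hx.
have not_bot_gt0 : 0 < prob_not_bot T x.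
  by have := prob_bot_add_not_bot x; rewrite T_sum1; lra.
by rewrite -ler_pdivlMr.
Qed.

Lemma correct_gap x b : h x = Some b ->
  (1 - eps) * prob_out T x (Some (~~ b)) <= eps * prob_out T x (Some b).
Proof. by case/correct_prob_out => _; rewrite (prob_not_bot_split x b); lra. Qed.

Lemma correct_prob_out_gt0 x b : eps < 1 -> h x = Some b -> 0 < prob_out T x (Some b).
Proof.
move=> eps_lt1 /correct_prob_out [not_bot_gt0 post].
by apply: lt_le_trans post; rewrite mulr_gt0 ?subr_gt0.
Qed.

End Correctness.

Section GoodConjunctions.
Variables (R : realType) (k : nat) (D : bool -> {ffun input k -> R}).
Hypothesis D_dist : forall z, is_dist (D z).
Variable eps : R.
Hypotheses (eps_ge0 : 0 <= eps) (eps_le1 : eps <= 1).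

Definition gap (C : conj_t k) z :=
  eps * conj_prob C (D z) - (1 - eps) * conj_prob C (D (~~ z)).

Definition good_conj C z := 0 < conj_prob C (D z) /\ 0 <= gap C z.

Lemma conj_prob_ge0 C z : 0 <= conj_prob C (D z).
Proof. by apply: expect_ge0 => // x _; rewrite ler0n. Qed.

Lemma gap_le_conj_prob C z : gap C z <= conj_prob C (D z).
Proof.
have eps_compl_ge0 : 0 <= 1 - eps by rewrite subr_ge0.
have := mulr_ge0 eps_compl_ge0 (conj_prob_ge0 C z).
have := mulr_ge0 eps_compl_ge0 (conj_prob_ge0 C (~~ z)).
rewrite /gap; lra.
Qed.

Lemma gap_setU1 C z i : gap C z = gap ((i, false) |: C) z + gap ((i, true) |: C) z.
Proof.
by rewrite /gap (conj_prob_setU1 (D z) C i) (conj_prob_setU1 (D (~~ z)) C i); ring.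
Qed.

Lemma good_conj_set0 z : eps = 1 -> good_conj set0 z.
Proof. by move=> eps1; rewrite /good_conj /gap eps1 !conj_prob_set0 //; split; lra. Qed.

Lemma good_conj_setU1 C z i : good_conj C z -> exists b, good_conj ((i, b) |: C) z.
Proof.
case=> C_pos C_gap.
have [b _ good_b] : exists2 b, b \in index_enum bool & good_conj ((i, b) |: C) z.
  apply: (exists_pos_of_sums (a := fun b => conj_prob ((i, b) |: C) (D z))
                             (g := fun b => gap ((i, b) |: C) z)) => [b _ | |].
  - exact: gap_le_conj_prob.
  - by rewrite big_bool /= addrC -conj_prob_setU1.
  - by rewrite big_bool /= addrC -gap_setU1.
by exists b.
Qed.

Lemma good_conj_widen n C z :
  (width C + n <= k)%N -> good_conj C z ->
  exists2 C', width C' = (width C + n)%N & good_conj C' z.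
Proof.
elim: n C => [|n IHn] C C_small C_good; first by exists C; rewrite ?addn0.
have [i i_fresh] : exists i, forall b, (i, b) \notin C by apply: exists_fresh_var; lia.
have [b Cb_good] := good_conj_setU1 i C_good.
have Cb_width : width ((i, b) |: C) = (width C).+1 by rewrite /width cardsU1 i_fresh.
have [|C' C'_width C'_good] := IHn _ _ Cb_good; first by rewrite Cb_width; lia.
by exists C'; rewrite // C'_width Cb_width; lia.
Qed.

Variables (h : pfun k) (T : rdtree R k).
Hypotheses (D_supp : forall z x, 0 < D z x -> h x = Some z)
           (T_correct : postbpp_correct eps h T).

Let acceptance z' z := \sum_x D z' x * prob_out T x (Some z).

Lemma sum_gap_rleaf_paths z :
  \sum_(w <- rleaf_paths T (Some z)) w.1 * gap w.2 z =
  eps * acceptance z z - (1 - eps) * acceptance (~~ z) z.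
Proof.
rewrite /acceptance !expect_prob_out !big_distrr -sumrB.
by apply: eq_bigr => w _; rewrite /gap /=; ring.
Qed.

Lemma sum_acceptance_gap_ge0 :
  0 <= \sum_z (eps * acceptance z z - (1 - eps) * acceptance (~~ z) z).
Proof.
have gap_ge0 z : 0 <= eps * acceptance z z - (1 - eps) * acceptance z (~~ z).
  have -> : eps * acceptance z z - (1 - eps) * acceptance z (~~ z) = \sum_x D z x *
      (eps * prob_out T x (Some z) - (1 - eps) * prob_out T x (Some (~~ z))).
    by rewrite /acceptance !big_distrr -sumrB; apply: eq_bigr => x _ /=; ring.
  by apply: expect_ge0 => // x /D_supp hx; rewrite subr_ge0 (correct_gap T_correct hx).
by have := gap_ge0 true; have := gap_ge0 false; rewrite big_bool /=; lra.
Qed.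

Lemma good_conj_of_correct : eps < 1 ->
  exists C z, (width C <= rcost T)%N /\ good_conj C z.
Proof.
move=> eps_lt1; have T_rdtree := T_correct.1.
have term_le z w : w \in rleaf_paths T (Some z) ->
    w.1 * gap w.2 z <= w.1 * conj_prob w.2 (D z).
  move=> w_in; rewrite ler_wpM2l ?gap_le_conj_prob //.
  exact: rleaf_paths_weight_ge0 T_rdtree w_in.
have [z _ [acc_gt0 gap_ge0]] : exists2 z, z \in index_enum bool &
    0 < acceptance z z /\ 0 <= eps * acceptance z z - (1 - eps) * acceptance (~~ z) z.
  apply: exists_pos_of_sums sum_acceptance_gap_ge0 => [z _ |].
    rewrite -sum_gap_rleaf_paths /acceptance expect_prob_out big_seq [leRHS]big_seq.
    by apply: ler_sum => w; apply: term_le.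
  have acc_gt0 : 0 < acceptance true true.
    apply: (expect_gt0 (D_dist _)) => x /D_supp hx.
    exact: (correct_prob_out_gt0 T_correct eps_lt1 hx).
  have acc_ge0 : 0 <= acceptance false false.
    apply: (expect_ge0 (D_dist _)) => x /D_supp hx.
    exact/ltW/(correct_prob_out_gt0 T_correct eps_lt1 hx).
  by rewrite big_bool /=; lra.
have [w w_in [w_pos w_gap]] : exists2 w, w \in rleaf_paths T (Some z) &
    0 < w.1 * conj_prob w.2 (D z) /\ 0 <= w.1 * gap w.2 z.
  apply: exists_pos_of_sums => [w /term_le | | ] //.
    by rewrite -expect_prob_out.
  by rewrite sum_gap_rleaf_paths.
have w1_gt0 : 0 < w.1.
  rewrite lt0r (rleaf_paths_weight_ge0 T_rdtree w_in) andbT.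
  by apply: contraTneq w_pos => ->; rewrite mul0r ltxx.
exists w.2, z; split; first exact: rleaf_paths_width w_in w1_gt0.
by split; [rewrite -(pmulr_rgt0 _ w1_gt0) | rewrite -(pmulr_rge0 _ w1_gt0)].
Qed.

End GoodConjunctions.

Section CompleteTrees.
Variable k : nat.

Definition assign (x : input k) i b : input k := [ffun j => if j == i then b else x j].

Fixpoint complete_tree (s : seq 'I_k) (g : input k -> option bool) : dtree k :=
  match s with
  | [::] => Leaf k (g [ffun=> false])
  | i :: s' => Node i (complete_tree s' (fun x => g (assign x i false)))
                      (complete_tree s' (fun x => g (assign x i true)))
  end.

Lemma eval_complete_tree s g (x : input k) :
  eval_tree (complete_tree s g) x = g [ffun j => if j \in s then x j else false].
Proof.
elim: s g => [|i s IHs] g /=; first by congr g; apply/ffunP => j; rewrite !ffunE.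
by case x_i: (x i); rewrite IHs; congr g; apply/ffunP => j;
  rewrite !ffunE inE; case: eqP => [-> |] //=; rewrite x_i.
Qed.

Lemma depth_complete_tree s g : depth (complete_tree s g) = size s.
Proof. by elim: s g => [|i s IHs] g //=; rewrite !IHs maxnn. Qed.

Definition completion (t : dtree k) := complete_tree (enum 'I_k) (eval_tree t).

Lemma eval_completion t x : eval_tree (completion t) x = eval_tree t x.
Proof.
by rewrite eval_complete_tree; congr eval_tree; apply/ffunP => j; rewrite ffunE mem_enum.
Qed.

Lemma depth_completion t : depth (completion t) = k.
Proof. by rewrite depth_complete_tree size_enum_ord. Qed.

Variable R : realType.

Definition rcompletion (T : rdtree R k) : rdtree R k :=
  [seq (p.1, completion p.2) | p <- T].

Lemma postbpp_correct_rcompletion eps h T :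
  postbpp_correct eps h T -> postbpp_correct eps h (rcompletion T).
Proof.
have prob_outE x o : prob_out (rcompletion T) x o = prob_out T x o.
  by rewrite /prob_out big_map; apply: eq_bigr => p _; rewrite eval_completion.
have prob_not_botE x : prob_not_bot (rcompletion T) x = prob_not_bot T x.
  by rewrite /prob_not_bot big_map; apply: eq_bigr => p _; rewrite eval_completion.
case=> [[T_ge0 T_sum1] T_post]; split; first by rewrite /is_rdtree all_map big_map.
by move=> x b hx; rewrite !prob_outE prob_not_botE; apply: T_post.
Qed.

Lemma rcost_rcompletion T : (rcost (rcompletion T) <= k)%N.
Proof.
by rewrite /rcost big_map; apply/bigmax_leqP_seq => p _ _; rewrite depth_completion.
Qed.

Lemma PostBPP_le_dim (eps : R) (h : pfun k) d : PostBPP_eq eps h d -> (d <= k)%N.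
Proof.
case=> [[T [T_correct _]] d_min].
exact: leq_trans (d_min _ (postbpp_correct_rcompletion T_correct)) (rcost_rcompletion T).
Qed.

End CompleteTrees.

Theorem fact2p1 (R : realType) (k : nat) (h : pfun k)
  (D : bool -> {ffun input k -> R})
  (hD : forall z, is_dist (D z))
  (hsupp : forall z x, 0 < D z x -> h x = Some z)
  (eps : R) (heps0 : 0 <= eps) (heps1 : eps <= 1)
  (d : nat) (hd : PostBPP_eq eps h d) :
  exists (C : conj_t k) (z : bool),
    width C = d /\
    eps * conj_prob C (D z) >= (1 - eps) * conj_prob C (D (~~ z)) /\
    0 < conj_prob C (D z).
Proof.
have [C0 [z [C0_width C0_good]]] : exists C z, (width C <= d)%N /\ good_conj D eps C z.
  have [eps1 | eps_ne1] := eqVneq eps 1.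
    (* A correct algorithm for eps = 1 may never accept, but then the empty
       conjunction is good. *)
    exists set0, true; rewrite /width cards0; split => //.
    exact: (good_conj_set0 hD true eps1).
  have [[T [T_correct <-]] _] := hd.
  by apply: (good_conj_of_correct hD heps1 hsupp T_correct); rewrite lt_neqAle eps_ne1.
have [|C C_width [C_pos C_gap]] :=
  good_conj_widen hD heps0 heps1 (n := (d - width C0)%N) _ C0_good.
  by have := PostBPP_le_dim hd; lia.
by exists C, z; rewrite C_width subnKC // -subr_ge0.
Qed.
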